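(* Let $\mathcal{G}$ be the complete quadrilateral with points $a,b,c,x,y,z$ and lines $\{a,b,c\}$, $\{a,y,z\}$, $\{b,x,z\}$, $\{c,x,y\}$; let $R$ be a commutative ring with $2=0$, $A=M_R(\mathcal{G},1)$, $\ell=a+b+c$ and $s=a+b+c+x+y+z$. Then $A=A^\ell_0\oplus A^\ell_1$, where $A^\ell_0$ and $A^\ell_1$ are the eigenspaces of $\operatorname{ad}_\ell$ for the eigenvalues $0$ and $1$, and \[ A^\ell_0=\langle a,b,c,x+y+z\rangle=\langle a,b,c,s\rangle,\qquad A^\ell_1=\langle \ell x,\ell y\rangle . \]
   Context: For distinct collinear points $p,q$ (written $p\sim q$), $p\wedge q$ is the third point of their line. The nilpotent Matsuo algebra $A=M_R(\mathcal{G},1)$ is the free $R$-module with basis the points and commutative bilinear product $p\cdot q=0$ if $p=q$ or $p\not\sim q$, $p\cdot q=p+q+p\wedge q$ if $p\sim q$. $\operatorname{ad}_\ell(v)=\ell v$; the eigenspace for $\lambda$ is $\{v:\ell v=\lambda v\}$. Angle brackets denote $R$-linear span. *)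

From HB Require Import structures.
From mathcomp Require Import all_boot all_order all_algebra.
Set Implicit Arguments. Unset Strict Implicit. Unset Printing Implicit Defensive.
Import Order.TTheory GRing.Theory Num.Theory.
Local Open Scope ring_scope.

Definition pa : 'I_6 := inord 0.
Definition pb : 'I_6 := inord 1.
Definition pc : 'I_6 := inord 2.
Definition px : 'I_6 := inord 3.
Definition py : 'I_6 := inord 4.
Definition pz : 'I_6 := inord 5.

Definition lines : seq (seq 'I_6) :=
  [:: [:: pa; pb; pc]; [:: pa; py; pz]; [:: pb; px; pz]; [:: pc; px; py]].

Definition collinear (p q : 'I_6) : bool :=
  (p != q) && has (fun L => (p \in L) && (q \in L)) lines.

Definition wedge (p q : 'I_6) : 'I_6 :=
  odflt p [pick r | [&& r != p, r != q &
                      has (fun L => [&& p \in L, q \in L & r \in L]) lines]].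

(* The algebra A = M_R(G,1): free R-module on the points, as row vectors
   indexed by the points. *)
Notation Alg R := 'rV[R]_6 (only parsing).

Definition pt (R : comPzRingType) (p : 'I_6) : Alg R := \row_(q < 6) (q == p)%:R.

Definition pprod (R : comPzRingType) (p q : 'I_6) : Alg R :=
  if collinear p q then pt R p + pt R q + pt R (wedge p q) else 0.

Definition amul (R : comPzRingType) (u v : Alg R) : Alg R :=
  \sum_(p : 'I_6) \sum_(q : 'I_6) (u 0 p * v 0 q) *: pprod R p q.

Definition eigen (R : comPzRingType) (l : Alg R) (lam : R) (v : Alg R) : Prop :=
  amul l v = lam *: v.

Definition in_span (R : comPzRingType) (vs : seq (Alg R)) (v : Alg R) : Prop :=
  exists k : 'I_(size vs) -> R, v = \sum_(i < size vs) k i *: nth 0 vs i.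

From HB Require Import structures.
From mathcomp Require Import all_boot all_order all_algebra ring.
Set Implicit Arguments.
Unset Strict Implicit.
Unset Printing Implicit Defensive.
Import GRing.Theory.
Local Open Scope ring_scope.

(* Since 2 = 0, l a = l b = l c = 0, l x = b + c + y + z, l y = a + c + x + z
   and l z = a + b + x + y = l x + l y.  Hence
   l v = (v_x + v_z) (l x) + (v_y + v_z) (l y), while l (l x) = l y + l z = l x
   and l (l y) = l y: ad_l is idempotent with image <l x, l y>, so A is the
   direct sum of its kernel A_0 and its image A_1.  As l x and l y are
   independent (compare their coordinates at a and b), the kernel is cut out
   by v_x = v_y = v_z, i.e. it is <a, b, c, x + y + z>. *)

Definition points : seq 'I_6 := [:: pa; pb; pc; px; py; pz].

Lemma enum_points : enum 'I_6 = points.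
Proof. by apply: (inj_map val_inj); rewrite val_enum_ord /= !inordK. Qed.

Lemma mem_points (r : 'I_6) : r \in points.
Proof. by rewrite -enum_points mem_enum. Qed.

Lemma pick_points (P : pred 'I_6) : [pick r | P r] = ohead [seq r <- points | P r].
Proof. by rewrite /pick /enum_mem -enumT enum_points. Qed.

Definition third (p q : 'I_6) : 'I_6 :=
  odflt p (ohead [seq r <- points | [&& r != p, r != q &
                     has (fun L => [&& p \in L, q \in L & r \in L]) lines]]).

Lemma wedgeE (p q : 'I_6) : wedge p q = third p q.
Proof. by rewrite /wedge pick_points. Qed.

Definition line_pts (p q : 'I_6) : seq 'I_6 :=
  if collinear p q then [:: p; q; third p q] else [::].

(* [inord] computes through the opaque [idP]; literal ordinals let [vm_compute]
   decide closed statements about the incidence structure. *)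
Lemma points_literal :
  pa = @Ordinal 6 0 isT /\ pb = @Ordinal 6 1 isT /\ pc = @Ordinal 6 2 isT /\
  px = @Ordinal 6 3 isT /\ py = @Ordinal 6 4 isT /\ pz = @Ordinal 6 5 isT.
Proof. by do ![split | apply: val_inj; rewrite /= inordK]. Qed.

Ltac decide_points :=
  unfold line_pts, third, collinear, lines, points;
  destruct points_literal as (Ea & Eb & Ec & Ex & Ey & Ez);
  rewrite ?Ea ?Eb ?Ec ?Ex ?Ey ?Ez; vm_compute; reflexivity.

Section Product.
Variable R : comPzRingType.

Lemma amul_is_linear (u : Alg R) : linear (amul u).
Proof.
move=> k v w; rewrite /amul scaler_sumr -big_split; apply: eq_bigr => p _.
rewrite scaler_sumr -big_split; apply: eq_bigr => q _.
by rewrite !mxE mulrDr scalerDl mulrCA scalerA.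
Qed.

HB.instance Definition _ (u : Alg R) :=
  GRing.isLinear.Build R (Alg R) (Alg R) *:%R (amul u) (amul_is_linear u).

Lemma amulDl (u u' v : Alg R) : amul (u + u') v = amul u v + amul u' v.
Proof.
rewrite /amul -big_split; apply: eq_bigr => p _.
by rewrite -big_split; apply: eq_bigr => q _; rewrite !mxE mulrDl scalerDl.
Qed.

Lemma amul0l (v : Alg R) : amul 0 v = 0.
Proof.
by rewrite /amul big1 // => p _; rewrite big1 // => q _; rewrite mxE mul0r scale0r.
Qed.

Lemma amul_pt_pt (p q : 'I_6) : amul (pt R p) (pt R q) = pprod R p q.
Proof.
rewrite /amul (bigD1 p) //= (bigD1 q) //= !mxE !eqxx mulr1 scale1r.
rewrite big1 ?addr0 => [|q' /negbTE nq]; last by rewrite !mxE nq mulr0 scale0r.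
rewrite big1 ?addr0 // => p' /negbTE np.
by rewrite big1 // => q' _; rewrite !mxE np mul0r scale0r.
Qed.

Definition sum_pts (S : seq 'I_6) : Alg R := \sum_(p <- S) pt R p.

Lemma sum_pts_nil : sum_pts [::] = 0.
Proof. exact: big_nil. Qed.

Lemma sum_pts_cons p (S : seq 'I_6) : sum_pts (p :: S) = pt R p + sum_pts S.
Proof. exact: big_cons. Qed.

Lemma sum_pts_cat (S T : seq 'I_6) : sum_pts (S ++ T) = sum_pts S + sum_pts T.
Proof. exact: big_cat. Qed.

Lemma sum_ptsE (S : seq 'I_6) r : sum_pts S 0 r = (count_mem r S)%:R.
Proof.
elim: S => [|p S IH]; first by rewrite sum_pts_nil mxE.
by rewrite sum_pts_cons mxE IH mxE /= natrD eq_sym.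
Qed.

Lemma pprod_line_pts (p q : 'I_6) : pprod R p q = sum_pts (line_pts p q).
Proof.
rewrite /pprod /line_pts wedgeE.
by case: collinear; rewrite ?sum_pts_nil // !sum_pts_cons sum_pts_nil addr0 !addrA.
Qed.

Lemma amul_sum_pts (S : seq 'I_6) q :
  amul (sum_pts S) (pt R q) = sum_pts (flatten [seq line_pts p q | p <- S]).
Proof.
elim: S => [|p S IH]; first by rewrite sum_pts_nil amul0l.
by rewrite sum_pts_cons amulDl amul_pt_pt pprod_line_pts IH sum_pts_cat.
Qed.

Lemma pt_expansion (v : Alg R) : v = \sum_(p <- points) v 0 p *: pt R p.
Proof.
rewrite -enum_points big_enum /= [v in LHS]row_sum_delta.
by apply: eq_bigr => p _; congr (_ *: _); apply/rowP => j; rewrite !mxE eqxx.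
Qed.

Lemma eigen01_eq0 (l v : Alg R) : eigen l 0 v -> eigen l 1 v -> v = 0.
Proof. by rewrite /eigen => ev0 ev1; rewrite -[v]scale1r -ev1 ev0 scale0r. Qed.

Lemma eigen01_decomposition (l : Alg R) :
    (forall v, amul l (amul l v) = amul l v) ->
  forall v, exists v0 v1, eigen l 0 v0 /\ eigen l 1 v1 /\ v = v0 + v1.
Proof.
move=> idem v; exists (v - amul l v), (amul l v); rewrite /eigen scale0r scale1r.
by rewrite linearB /= idem subrr subrK.
Qed.

Lemma in_span2 (u1 u2 v : Alg R) :
  in_span [:: u1; u2] v <-> exists k1 k2, v = k1 *: u1 + k2 *: u2.
Proof.
rewrite /in_span /=; split => [[k ->]|[k1 [k2 ->]]].
  by rewrite !big_ord_recl big_ord0 addr0; do 2 eexists.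
by exists (fun i => nth 0 [:: k1; k2] i); rewrite !big_ord_recl big_ord0 addr0.
Qed.

Lemma in_span4 (u1 u2 u3 u4 v : Alg R) :
  in_span [:: u1; u2; u3; u4] v <->
  exists k1 k2 k3 k4, v = k1 *: u1 + k2 *: u2 + k3 *: u3 + k4 *: u4.
Proof.
rewrite /in_span /=; split => [[k ->]|[k1 [k2 [k3 [k4 ->]]]]].
  by rewrite !big_ord_recl big_ord0 addr0 !addrA; do 4 eexists.
exists (fun i => nth 0 [:: k1; k2; k3; k4] i).
by rewrite !big_ord_recl big_ord0 addr0 !addrA.
Qed.

Lemma in_span4_shift (u1 u2 u3 w v : Alg R) :
  in_span [:: u1; u2; u3; w] v <-> in_span [:: u1; u2; u3; u1 + u2 + u3 + w] v.
Proof.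
rewrite !in_span4; split=> -[k1 [k2 [k3 [k4 ->]]]].
  by exists (k1 - k4), (k2 - k4), (k3 - k4), k4; apply/rowP => j; rewrite !mxE; ring.
by exists (k1 + k4), (k2 + k4), (k3 + k4), k4; apply/rowP => j; rewrite !mxE; ring.
Qed.

End Product.

Section Char2.
Variable R : comPzRingType.
Hypothesis char2 : 2%:R = 0 :> R.

Lemma addrr_char2 (V : lmodType R) (v : V) : v + v = 0.
Proof. by rewrite -mulr2n -scaler_nat char2 scale0r. Qed.

Lemma addr_eq0_char2 (V : lmodType R) (u v : V) : (u + v == 0) = (u == v).
Proof.
have oppv : - v = v by apply/eqP; rewrite eq_sym -addr_eq0 addrr_char2.
by rewrite addr_eq0 oppv.
Qed.

Lemma natr_odd n : n%:R = (odd n)%:R :> R.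
Proof. by rewrite -[n in LHS]odd_double_half natrD -mul2n natrM char2 mul0r addr0. Qed.

Lemma sum_pts_parity (S T : seq 'I_6) :
  all (fun r => odd (count_mem r S) == odd (count_mem r T)) points ->
  sum_pts R S = sum_pts R T.
Proof.
move=> /allP parity; apply/rowP => r.
by rewrite !sum_ptsE natr_odd (eqP (parity r (mem_points r))) -natr_odd.
Qed.

Local Notation a := (pt R pa).
Local Notation b := (pt R pb).
Local Notation c := (pt R pc).
Local Notation x := (pt R px).
Local Notation y := (pt R py).
Local Notation z := (pt R pz).
Local Notation l := (a + b + c).

Lemma amul_l_pt q :
  amul l (pt R q) = sum_pts R (flatten [seq line_pts p q | p <- [:: pa; pb; pc]]).
Proof. by rewrite -amul_sum_pts !sum_pts_cons sum_pts_nil addr0 addrA. Qed.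

Lemma amul_l_a : amul l a = 0.
Proof. by rewrite amul_l_pt (@sum_pts_parity _ [::]) ?sum_pts_nil //; decide_points. Qed.

Lemma amul_l_b : amul l b = 0.
Proof. by rewrite amul_l_pt (@sum_pts_parity _ [::]) ?sum_pts_nil //; decide_points. Qed.

Lemma amul_l_c : amul l c = 0.
Proof. by rewrite amul_l_pt (@sum_pts_parity _ [::]) ?sum_pts_nil //; decide_points. Qed.

Lemma amul_l_x : amul l x = b + c + y + z.
Proof.
rewrite amul_l_pt (@sum_pts_parity _ [:: pb; pc; py; pz]); last by decide_points.
by rewrite !sum_pts_cons sum_pts_nil addr0 !addrA.
Qed.

Lemma amul_l_y : amul l y = a + c + x + z.
Proof.
rewrite amul_l_pt (@sum_pts_parity _ [:: pa; pc; px; pz]); last by decide_points.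
by rewrite !sum_pts_cons sum_pts_nil addr0 !addrA.
Qed.

Lemma amul_l_z : amul l z = amul l x + amul l y.
Proof.
rewrite amul_l_x amul_l_y amul_l_pt.
rewrite (@sum_pts_parity _ ([:: pb; pc; py; pz] ++ [:: pa; pc; px; pz])); last by decide_points.
by rewrite sum_pts_cat !sum_pts_cons sum_pts_nil !addr0 !addrA.
Qed.

Lemma amul_lE v :
  amul l v = (v 0 px + v 0 pz) *: amul l x + (v 0 py + v 0 pz) *: amul l y.
Proof.
rewrite [in LHS](pt_expansion v) linear_sum /= !big_cons big_nil !linearZ /=.
rewrite amul_l_a amul_l_b amul_l_c amul_l_z.
by apply/rowP => j; rewrite !mxE; ring.
Qed.

Lemma amul_l_idem v : amul l (amul l v) = amul l v.
Proof.
have llx : amul l (amul l x) = amul l x.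
  rewrite {1}amul_l_x !linearD /= amul_l_b amul_l_c amul_l_z.
  by rewrite !add0r addrC -addrA addrr_char2 addr0.
have lly : amul l (amul l y) = amul l y.
  rewrite {1}amul_l_y !linearD /= amul_l_a amul_l_c amul_l_z.
  by rewrite !add0r addrA addrr_char2 add0r.
by rewrite {1}(amul_lE v) linearD !linearZ /= llx lly -(amul_lE v).
Qed.

Lemma amul_l_coords :
  [/\ amul l x 0 pa = 0, amul l x 0 pb = 1, amul l y 0 pa = 1 & amul l y 0 pb = 0].
Proof.
split; rewrite amul_l_pt sum_ptsE;
  [ rewrite (_ : count_mem _ _ = 0%N) | rewrite (_ : count_mem _ _ = 1%N)
  | rewrite (_ : count_mem _ _ = 1%N) | rewrite (_ : count_mem _ _ = 0%N) ];
  by [|decide_points].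
Qed.

Lemma eigen1_span v : eigen l 1 v <-> in_span [:: amul l x; amul l y] v.
Proof.
rewrite in_span2 /eigen scale1r; split => [<-|[k1 [k2 ->]]].
  by rewrite amul_lE; do 2 eexists.
by rewrite linearD !linearZ /= !amul_l_idem.
Qed.

Lemma eigen0_span v : eigen l 0 v <-> in_span [:: a; b; c; x + y + z] v.
Proof.
rewrite in_span4 /eigen scale0r; split => [|[k1 [k2 [k3 [k4 ->]]]]]; last first.
  rewrite !linearD !linearZ /= amul_l_a amul_l_b amul_l_c amul_l_z !scaler0 !add0r.
  by rewrite -!scalerDr addrr_char2 scaler0.
rewrite amul_lE => lv0; case: amul_l_coords => xa xb ya yb.
have /eqP := congr1 (fun w : Alg R => w 0 pa) lv0.
rewrite !mxE xa ya mulr0 mulr1 add0r (addr_eq0_char2 (V := R^o)) => /eqP vy.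
have /eqP := congr1 (fun w : Alg R => w 0 pb) lv0.
rewrite !mxE xb yb mulr0 mulr1 addr0 (addr_eq0_char2 (V := R^o)) => /eqP vx.
exists (v 0 pa), (v 0 pb), (v 0 pc), (v 0 pz).
rewrite [LHS]pt_expansion !big_cons big_nil vx vy.
by apply/rowP => j; rewrite !mxE; ring.
Qed.

End Char2.

Theorem proposition5p12 (R : comPzRingType) (h2 : 2%:R = 0 :> R) :
  let a := pt R pa in let b := pt R pb in let c := pt R pc in
  let x := pt R px in let y := pt R py in let z := pt R pz in
  let l := a + b + c in
  let s := a + b + c + x + y + z in
  (* A = A_0 + A_1, and the sum is direct *)
  (forall v : Alg R, exists v0 v1, eigen l 0 v0 /\ eigen l 1 v1 /\ v = v0 + v1) /\
  (forall v : Alg R, eigen l 0 v -> eigen l 1 v -> v = 0) /\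
  (* A_0 = <a,b,c,x+y+z> = <a,b,c,s> *)
  (forall v : Alg R, eigen l 0 v <-> in_span [:: a; b; c; x + y + z] v) /\
  (forall v : Alg R, eigen l 0 v <-> in_span [:: a; b; c; s] v) /\
  (* A_1 = <l x, l y> *)
  (forall v : Alg R, eigen l 1 v <-> in_span [:: amul l x; amul l y] v).
Proof.
move=> a b c x y z l s.
split; first exact: eigen01_decomposition (amul_l_idem h2).
split; first exact: eigen01_eq0.
split; first exact: eigen0_span.
split; last exact: eigen1_span.
by move=> v; rewrite eigen0_span // in_span4_shift /s !addrA.
Qed.
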